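(* For every two natural numbers $a,b$ with $3\le a\le b$, there exists a finite, simple, connected graph $G$ such that $\dim_{wt}(G)=a$ and $res_{wt}(G)=b$.
   Context: $d(x,y)$ is the shortest-path distance. A set $W\subseteq V(G)$ is a resolving set if for every two distinct vertices $y,z$ there is $x\in W$ with $d(y,x)\ne d(z,x)$. A set $W$ is a weak total resolving set (WTR-set) if $W$ is resolving and, for every $w\in W$ and every $x\in V(G)\setminus W$, there is $w'\in W\setminus\{w\}$ with $d(x,w')\ne d(w,w')$. $\dim_{wt}(G)$ is the minimum cardinality of a WTR-set. The weak total resolving number $res_{wt}(G)$ is the minimum positive integer $r$ such that every set of $r$ vertices of $G$ is a WTR-set for $G$. *)

From mathcomp Require Import all_boot.
Set Implicit Arguments. Unset Strict Implicit. Unset Printing Implicit Defensive.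

Definition simple_graph (T : finType) (e : rel T) : Prop :=
  symmetric e /\ irreflexive e.

Definition connected_graph (T : finType) (e : rel T) : Prop :=
  forall x y : T, connect e x y.

Fixpoint ball (T : finType) (e : rel T) (x : T) (n : nat) : {set T} :=
  match n with
  | 0 => [set x]
  | n'.+1 => ball e x n' :|: [set z | [exists y in ball e x n', e y z]]
  end.

(* shortest-path distance: least n with y in ball x n (in a connected graph
   this is < #|T|, so the search range iota 0 #|T| suffices) *)
Definition dist (T : finType) (e : rel T) (x y : T) : nat :=
  find (fun n => y \in ball e x n) (iota 0 #|T|).

Definition resolving (T : finType) (e : rel T) (W : {set T}) : Prop :=
  forall y z : T, y != z -> exists2 x, x \in W & dist e y x != dist e z x.

Definition WTR_set (T : finType) (e : rel T) (W : {set T}) : Prop :=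
  resolving e W /\
  forall w x, w \in W -> x \notin W ->
    exists2 w', w' \in W :\ w & dist e x w' != dist e w w'.

Definition wt_dim_eq (T : finType) (e : rel T) (k : nat) : Prop :=
  (exists W : {set T}, WTR_set e W /\ #|W| = k) /\
  (forall W : {set T}, WTR_set e W -> k <= #|W|).

Definition all_r_sets_WTR (T : finType) (e : rel T) (r : nat) : Prop :=
  forall W : {set T}, #|W| = r -> WTR_set e W.

Definition wt_res_eq (T : finType) (e : rel T) (k : nat) : Prop :=
  0 < k /\ all_r_sets_WTR e k /\
  (forall r, 0 < r -> r < k -> ~ all_r_sets_WTR e r).

From mathcomp Require Import all_boot zify.
Set Implicit Arguments. Unset Strict Implicit. Unset Printing Implicit Defensive.

(* Twins u, v (vertices with d(u, y) = d(v, y) for every other y) must both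
   belong to every WTR-set, and no set containing exactly one of them is a
   WTR-set; so a graph with a pair of twins has res_wt equal to its order.
   The complete graph K_a (all vertices pairwise twins) gives a = b.  For
   a < b take a broom: a - 1 pendant leaves (pairwise twins) attached to the
   end of a path, b vertices in all; the leaves alone do not form a WTR-set,
   while the leaves together with the far end of the path do, so
   dim_wt = a. *)

Lemma find_iota_leq m N : m < N -> find (fun n => m <= n) (iota 0 N) = m.
Proof.
move=> ltmN.
have has_m : has (fun n => m <= n) (iota 0 N).
  by apply/hasP; exists m; rewrite ?mem_iota ?leqnn.
have lt_find : find (fun n => m <= n) (iota 0 N) < N.
  by rewrite -[X in _ < X](size_iota 0 N) -has_find.
have := nth_find 0 has_m; rewrite nth_iota // add0n => le_m_find.
apply/eqP; rewrite eqn_leq le_m_find andbT leqNgt; apply/negP => lt_find_m.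
by have := before_find 0 lt_find_m; rewrite nth_iota // add0n leqnn.
Qed.

Lemma exists_subset_card (T : finType) (A : {set T}) k :
  k <= #|A| -> exists2 B : {set T}, B \subset A & #|B| = k.
Proof.
case/card_geqP => s [uniq_s size_s sub_sA]; exists [set x in s].
  by apply/subsetP => x; rewrite inE => /sub_sA.
by rewrite cardsE (card_uniqP uniq_s).
Qed.

Section DistanceFunction.
Variables (T : finType) (e : rel T) (D : T -> T -> nat).
Hypothesis D_eq0 : forall x y, (D x y == 0) = (x == y).
Hypothesis D_edge : forall x y z, e y z -> D x z <= (D x y).+1.
Hypothesis D_pred : forall x z, 0 < D x z -> exists2 y, e y z & D x y < D x z.

Lemma ball_distance_function x n : ball e x n = [set y | D x y <= n].
Proof.
elim: n => [|n IHn] /=; first by apply/setP => y; rewrite !inE leqn0 D_eq0 eq_sym.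
apply/setP => z; rewrite !inE IHn inE; apply/idP/idP.
- case/orP => [/leqW //|/existsP[y /andP[]]]; rewrite inE => le_yn e_yz.
  exact: leq_trans (D_edge x e_yz) _.
- rewrite leq_eqVlt ltnS => /orP[/eqP Dz|-> //].
  have [y e_yz lt_yz] := D_pred (ltac:(by rewrite Dz) : 0 < D x z).
  by apply/orP; right; apply/existsP; exists y; rewrite inE e_yz andbT -ltnS -Dz.
Qed.

Lemma connect_ball x n y : y \in ball e x n -> connect e x y.
Proof.
elim: n y => [|n IHn] y /=; first by rewrite inE => /eqP ->.
rewrite !inE => /orP[/IHn //|/existsP[z /andP[/IHn con_xz e_zy]]].
exact: connect_trans con_xz (connect1 e_zy).
Qed.

(* [dist] only searches for distances below [#|T|]. *)
Hypothesis D_lt_card : forall x y, D x y < #|T|.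

Lemma dist_distance_function x y : dist e x y = D x y.
Proof.
rewrite /dist (@eq_find _ _ (fun n => D x y <= n)) ?find_iota_leq //.
by move=> n; rewrite ball_distance_function inE.
Qed.

Lemma connected_distance_function : connected_graph e.
Proof. by move=> x y; apply: (@connect_ball x (D x y)); rewrite ball_distance_function inE. Qed.

End DistanceFunction.

Section Distance.
Variables (T : finType) (e : rel T).

Lemma dist_eq0 x y : (dist e x y == 0) = (x == y).
Proof.
have : 0 < #|T| by apply/card_gt0P; exists x.
rewrite /dist; case: #|T| => // n _ /=.
by rewrite inE [y == x]eq_sym; case: (x == y).
Qed.

Lemma dist_self_separates y z : y != z -> dist e y y != dist e z y.
Proof.
move=> neq_yz; have := dist_eq0 y y; rewrite eqxx => /eqP ->.
by rewrite eq_sym dist_eq0 eq_sym.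
Qed.

Lemma setT_WTR : WTR_set e [set: T].
Proof.
split=> [y z neq_yz|w x _]; last by rewrite inE.
by exists y; rewrite ?inE ?dist_self_separates.
Qed.

Definition twins (u v : T) : Prop :=
  forall y, y != u -> y != v -> dist e u y = dist e v y.

Lemma twins_sym u v : twins u v -> twins v u.
Proof. by move=> tw_uv y yv yu; rewrite tw_uv. Qed.

(* A WTR-set cannot tell apart two twins that it misses, nor a missing twin
   from a present one. *)
Lemma twin_mem_WTR u v W : twins u v -> u != v -> WTR_set e W -> u \in W.
Proof.
move=> tw_uv neq_uv [resW totW]; apply/negPn/negP => uW.
have neq_u y : y \in W -> y != u by apply: contraTneq => ->.
case: (boolP (v \in W)) => vW.
- have [w'] := totW v u vW uW; rewrite !inE => /andP[w'v w'W].
  by rewrite tw_uv ?eqxx ?neq_u.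
- have [x xW] := resW u v neq_uv.
  by rewrite tw_uv ?eqxx ?neq_u //; apply: contraTneq xW => ->.
Qed.

Lemma twin_class_sub_WTR (C W : {set T}) :
  {in C &, forall c c', c != c' -> twins c c'} -> 1 < #|C| ->
  WTR_set e W -> C \subset W.
Proof.
move=> twC /card_gt1P[x [y [xC yC neq_xy]]] WTR_W.
apply/subsetP => c cC.
have [c' c'C neq_cc'] : exists2 c', c' \in C & c != c'.
  by case: (eqVneq c x) => [->|]; [exists y | exists x].
exact: twin_mem_WTR (twC c c' cC c'C neq_cc') neq_cc' WTR_W.
Qed.

Lemma WTR_card_gt_twin_class (C W : {set T}) :
  {in C &, forall c c', c != c' -> twins c c'} -> 1 < #|C| ->
  ~ WTR_set e C -> WTR_set e W -> #|C| < #|W|.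
Proof.
move=> twC gt1C notWTR_C WTR_W; have subCW := twin_class_sub_WTR twC gt1C WTR_W.
rewrite ltn_neqAle subset_leq_card // andbT; apply: contra_notN notWTR_C => eq_card.
suff -> : C = W by [].
by apply/eqP; rewrite eqEcard subCW (eqP eq_card) leqnn.
Qed.

Lemma wt_res_card_of_twins u v : twins u v -> u != v -> wt_res_eq e #|T|.
Proof.
move=> tw_uv neq_uv; split; [by apply/card_gt0P; exists u | split].
  move=> W cardW; suff -> : W = [set: T] by exact: setT_WTR.
  by apply/eqP; rewrite eqEcard subsetT cardsT cardW leqnn.
move=> r r_gt0 lt_rT all_r.
have card_uv : #|~: [set u; v]| = #|T| - 2 by rewrite cardsCs setCK cards2 neq_uv.
have [B subB cardB] := @exists_subset_card _ (~: [set u; v]) r.-1 ltac:(lia).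
have notin_B y : y \in B -> (y != u) && (y != v).
  by move/(subsetP subB); rewrite !inE negb_or.
have uB : u \notin B by apply/negP => /notin_B; rewrite eqxx.
have vW : v \notin u |: B.
  by rewrite !inE negb_or eq_sym neq_uv; apply/negP => /notin_B; rewrite eqxx andbF.
have cardW : #|u |: B| = r by rewrite cardsU1 uB cardB; lia.
by move: vW; rewrite (twin_mem_WTR (twins_sym tw_uv) _ (all_r _ cardW)) // eq_sym.
Qed.

Lemma wt_dim_card_of_twins :
  (forall u, exists2 v, v != u & twins u v) -> wt_dim_eq e #|T|.
Proof.
move=> has_twin; split.
  by exists [set: T]; rewrite cardsT; split; first exact: setT_WTR.
move=> W WTR_W; rewrite -cardsT subset_leq_card //; apply/subsetP => u _.
by have [v neq_vu tw_uv] := has_twin u; apply: twin_mem_WTR tw_uv _ WTR_W; rewrite eq_sym.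
Qed.

End Distance.

Section CompleteGraph.
Variable n : nat.

Definition complete_adj : rel 'I_n.+2 := fun x y => x != y.

Lemma complete_simple : simple_graph complete_adj.
Proof. by split=> [x y|x]; rewrite /complete_adj ?eqxx // eq_sym. Qed.

Definition complete_D (x y : 'I_n.+2) : nat := x != y.

Lemma complete_D_eq0 x y : (complete_D x y == 0) = (x == y).
Proof. by rewrite /complete_D; case: (x =P y). Qed.

Lemma complete_D_edge x y z : complete_adj y z -> complete_D x z <= (complete_D x y).+1.
Proof. by rewrite /complete_D; case: (x != z); case: (x != y). Qed.

Lemma complete_D_pred x z :
  0 < complete_D x z -> exists2 y, complete_adj y z & complete_D x y < complete_D x z.
Proof. by rewrite /complete_D lt0b => neq_xz; exists x; rewrite // eqxx neq_xz. Qed.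

Lemma complete_D_lt_card x y : complete_D x y < #|'I_n.+2|.
Proof. by rewrite card_ord /complete_D; case: (x != y). Qed.

Lemma complete_dist x y : dist complete_adj x y = complete_D x y.
Proof.
exact: dist_distance_function complete_D_eq0 complete_D_edge complete_D_pred complete_D_lt_card x y.
Qed.

Lemma complete_connected : connected_graph complete_adj.
Proof. exact: connected_distance_function complete_D_eq0 complete_D_edge complete_D_pred. Qed.

Lemma complete_twins x y : twins complete_adj x y.
Proof. by move=> z zx zy; rewrite !complete_dist /complete_D eq_sym zx eq_sym zy. Qed.

Lemma complete_wt_dim : wt_dim_eq complete_adj n.+2.
Proof.
rewrite -[X in wt_dim_eq _ X]card_ord; apply: wt_dim_card_of_twins => x.
have [-> | neq_x0] := eqVneq x ord0; [exists ord_max | exists ord0];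
  rewrite 1?eq_sym //; exact: complete_twins.
Qed.

Lemma complete_wt_res : wt_res_eq complete_adj n.+2.
Proof.
rewrite -[X in wt_res_eq _ X]card_ord.
exact: wt_res_card_of_twins (@complete_twins ord0 ord_max) _.
Qed.

End CompleteGraph.

Section Broom.
Variables k m : nat.

(* [k.+2] pendant leaves [inl i] hang from [inr 0], the first vertex of the
   path [inr 0 -- inr 1 -- ... -- inr m.+1]. *)
Definition broom_vertex : finType := ('I_k.+2 + 'I_m.+2)%type.

Definition broom_depth (x : broom_vertex) : nat := if x is inr j then j.+1 else 0.

Definition broom_adj : rel broom_vertex := fun x y =>
  match x, y with
  | inl _, inr j | inr j, inl _ => j == 0 :> nat
  | inr i, inr j => (i.+1 == j) || (j.+1 == i)
  | inl _, inl _ => false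
  end.

Definition broom_D (x y : broom_vertex) : nat :=
  match x, y with
  | inl i, inl j => if i == j then 0 else 2
  | _, _ => (broom_depth x - broom_depth y) + (broom_depth y - broom_depth x)
  end.

Lemma broom_simple : simple_graph broom_adj.
Proof.
split; first by case=> i; case=> j //=; rewrite orbC.
by case=> i //=; apply/negP => /orP[] /eqP; lia.
Qed.

Lemma broom_D_eq0 x y : (broom_D x y == 0) = (x == y).
Proof.
case: x => i; case: y => j /=.
- by rewrite (inj_eq inl_inj); case: (i == j).
- by rewrite subn0.
- by rewrite sub0n.
- rewrite (inj_eq inr_inj) -val_eqE /=; lia.
Qed.

Lemma broom_D_edge x y z : broom_adj y z -> broom_D x z <= (broom_D x y).+1.
Proof. by case: x => i; case: y => j; case: z => l //=; repeat case: ifP; lia. Qed.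

Lemma broom_D_pred x z :
  0 < broom_D x z -> exists2 y, broom_adj y z & broom_D x y < broom_D x z.
Proof.
case: z => [l|l] D_gt0.
  exists (inr ord0) => //.
  by move: D_gt0; case: x => [i|i] /=; try case: ifP; have := ltn_ord i; lia.
case: (ltngtP (broom_depth x) l.+1) => cmp_x.
- case: l D_gt0 cmp_x => [[|l] lt_l] D_gt0 cmp_x.
    by case: x D_gt0 cmp_x => [i|i] //= _ _; exists (inl i); rewrite /= ?eqxx.
  exists (inr (Ordinal (ltnW lt_l))); first by rewrite /= eqxx.
  by move: D_gt0; case: x cmp_x => [i|i] /=; lia.
- case: x D_gt0 cmp_x => [i|i] //= D_gt0 cmp_x.
  have lt_l : l.+1 < m.+2 by have := ltn_ord i; lia.
  by exists (inr (Ordinal lt_l)); rewrite /= ?eqxx //; lia.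
- case: x D_gt0 cmp_x => [i|i] //= D_gt0 /eqP; rewrite eqSS => /eqP eq_il.
  by rewrite eq_il subnn in D_gt0.
Qed.

Lemma broom_D_lt_card x y : broom_D x y < #|broom_vertex|.
Proof.
rewrite card_sum !card_ord.
by case: x => [i|i]; case: y => [j|j] /=; try case: ifP; have := ltn_ord i; have := ltn_ord j; lia.
Qed.

Lemma broom_dist x y : dist broom_adj x y = broom_D x y.
Proof.
exact: dist_distance_function broom_D_eq0 broom_D_edge broom_D_pred broom_D_lt_card x y.
Qed.

Lemma broom_connected : connected_graph broom_adj.
Proof. exact: connected_distance_function broom_D_eq0 broom_D_edge broom_D_pred. Qed.

Definition broom_leaves : {set broom_vertex} := inl @: [set: 'I_k.+2].

Lemma mem_broom_leaves x : (x \in broom_leaves) = (broom_depth x == 0).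
Proof. by case: x => [i|j]; [rewrite imset_f | apply/imsetP => -[]]. Qed.

Lemma card_broom_leaves : #|broom_leaves| = k.+2.
Proof. by rewrite card_imset ?cardsT ?card_ord //; apply: inl_inj. Qed.

Lemma broom_leaves_twins :
  {in broom_leaves &, forall c c', c != c' -> twins broom_adj c c'}.
Proof.
move=> c c'; rewrite !mem_broom_leaves; case: c => [i|//]; case: c' => [i'|//] _ _ _.
move=> [l|l] neq_li neq_li'; rewrite !broom_dist //=.
move: neq_li neq_li'; rewrite !(inj_eq inl_inj) => neq_li neq_li'.
by rewrite eq_sym (negPf neq_li) eq_sym (negPf neq_li').
Qed.

Lemma broom_leaves_not_WTR : ~ WTR_set broom_adj broom_leaves.
Proof.
case=> _ sep_leaves; pose x := inr (Ordinal (isT : 1 < m.+2)) : broom_vertex.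
have [w'] := sep_leaves (inl ord0) x
  ltac:(by rewrite mem_broom_leaves) ltac:(by rewrite mem_broom_leaves).
rewrite in_setD1 mem_broom_leaves; case: w' => [i|//] /andP[neq_i0 _].
rewrite (inj_eq inl_inj) eq_sym in neq_i0.
by rewrite !broom_dist /= (negPf neq_i0).
Qed.

Definition broom_basis : {set broom_vertex} := inr ord_max |: broom_leaves.

Lemma mem_broom_basis x :
  (x \in broom_basis) = if x is inr j then j == m.+1 :> nat else true.
Proof.
by rewrite in_setU1 mem_broom_leaves; case: x => [i|j] /=; rewrite ?orbT ?orbF.
Qed.

Lemma broom_basis_resolving : resolving broom_adj broom_basis.
Proof.
move=> y z neq_yz.
have [yB|yNB] := boolP (y \in broom_basis); first by exists y; rewrite ?dist_self_separates.
have [zB|zNB] := boolP (z \in broom_basis).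
  by exists z; rewrite // eq_sym dist_self_separates // eq_sym.
exists (inr ord_max); first by rewrite mem_broom_basis.
move: yNB zNB neq_yz; rewrite !mem_broom_basis !broom_dist.
case: y => // j; case: z => // l /= neq_jm neq_lm.
rewrite (inj_eq inr_inj) -val_eqE /=; have := ltn_ord j; have := ltn_ord l; lia.
Qed.

Lemma broom_basis_WTR : WTR_set broom_adj broom_basis.
Proof.
split; first exact: broom_basis_resolving.
move=> w x; rewrite !mem_broom_basis => wB; case: x => // j neq_jm.
case: w wB => [i _|l /eqP eq_lm].
  exists (inr ord_max); first by rewrite in_setD1 mem_broom_basis /= eqxx.
  by rewrite !broom_dist /=; have := ltn_ord j; lia.
exists (inl ord0); first by rewrite in_setD1 mem_broom_basis.
by rewrite !broom_dist /=; lia.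
Qed.

Lemma broom_wt_dim : wt_dim_eq broom_adj k.+3.
Proof.
split.
  exists broom_basis; split; first exact: broom_basis_WTR.
  by rewrite cardsU1 mem_broom_leaves card_broom_leaves.
move=> W WTR_W; rewrite -card_broom_leaves.
apply: WTR_card_gt_twin_class broom_leaves_twins _ broom_leaves_not_WTR WTR_W.
by rewrite card_broom_leaves.
Qed.

Lemma broom_wt_res : wt_res_eq broom_adj (k.+2 + m.+2).
Proof.
have -> : k.+2 + m.+2 = #|broom_vertex| by rewrite card_sum !card_ord.
have leaf_mem i : inl i \in broom_leaves by rewrite mem_broom_leaves.
exact: wt_res_card_of_twins (broom_leaves_twins (leaf_mem ord0) (leaf_mem ord_max) _) _.
Qed.

End Broom.

Theorem theorem8 (a b : nat) :
  3 <= a -> a <= b ->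
  exists (T : finType) (e : rel T),
    simple_graph e /\ connected_graph e /\ wt_dim_eq e a /\ wt_res_eq e b.
Proof.
move=> le3a leab; have [<- | neq_ab] := eqVneq a b.
  have -> : a = (a - 2).+2 by lia.
  exists _, (@complete_adj (a - 2)).
  split; [exact: complete_simple | split; [exact: complete_connected | split]].
    exact: complete_wt_dim.
  exact: complete_wt_res.
have -> : a = (a - 3).+3 by lia.
have -> : b = (a - 3).+2 + (b - a - 1).+2 by lia.
exists _, (@broom_adj (a - 3) (b - a - 1)).
split; [exact: broom_simple | split; [exact: broom_connected | split]].
  exact: broom_wt_dim.
exact: broom_wt_res.
Qed.
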